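(* If $R$ is a right almost perfect ring, then every non-faithful left $R$-module is semiartinian.
   Context: Rings are associative with identity $1\neq 0$. A ring $R$ is called right almost perfect if $R/I$ is a right perfect ring for every two-sided ideal $I$ of $R$ with $I\neq 0$ and $I\neq R$. A module $M$ is non-faithful if its annihilator in $R$ is non-zero. A module $M$ is semiartinian if every non-zero homomorphic image of $M$ contains a simple submodule (equivalently, every homomorphic image of $M$ is an essential extension of its socle). *)

From HB Require Import structures.
From mathcomp Require Import all_boot all_order all_algebra.
Set Implicit Arguments. Unset Strict Implicit. Unset Printing Implicit Defensive.
Import GRing.Theory.
Local Open Scope ring_scope.

Definition left_ideal (R : nzRingType) (L : R -> Prop) : Prop :=
  [/\ L 0, (forall x y, L x -> L y -> L (x + y)) & (forall r x, L x -> L (r * x))].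

Definition two_sided_ideal (R : nzRingType) (I : R -> Prop) : Prop :=
  [/\ left_ideal I & (forall r x, I x -> I (x * r))].

Definition maximal_left_ideal (R : nzRingType) (L : R -> Prop) : Prop :=
  [/\ left_ideal L, ~ L 1 &
      forall L' : R -> Prop, left_ideal L' -> (forall x, L x -> L' x) ->
        L' 1 \/ (forall x, L' x -> L x)].

Definition jacobson (R : nzRingType) (x : R) : Prop :=
  forall L : R -> Prop, maximal_left_ideal L -> L x.

Fixpoint rev_prod (R : nzRingType) (a : nat -> R) (n : nat) : R :=
  match n with
  | 0 => a 0%N
  | m.+1 => a m.+1 * rev_prod a m
  end.

(* right T-nilpotent: for every sequence a_0, a_1, ... in A, some product
   a_n ... a_1 a_0 vanishes (the condition making M A <> M for every nonzero
   right module M) *)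
Definition right_T_nilpotent (R : nzRingType) (A : R -> Prop) : Prop :=
  forall a : nat -> R, (forall n, A (a n)) -> exists n, rev_prod a n = 0.

(* semisimple ring: the left regular module is semisimple, i.e. every left
   ideal is a direct summand of R *)
Definition semisimple_ring (R : nzRingType) : Prop :=
  forall L : R -> Prop, left_ideal L ->
    exists L' : R -> Prop, [/\ left_ideal L',
      (forall x, L x -> L' x -> x = 0) &
      (forall x, exists y z, [/\ L y, L' z & x = y + z])].

Definition is_quotient_ring (R S : nzRingType) (f : {rmorphism R -> S})
    (I : R -> Prop) : Prop :=
  (forall y, exists x, f x = y) /\ (forall x, f x = 0 <-> I x).

Definition right_perfect (S : nzRingType) : Prop :=
  right_T_nilpotent (@jacobson S) /\
  forall (T : nzRingType) (g : {rmorphism S -> T}),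
    is_quotient_ring g (@jacobson S) -> semisimple_ring T.

Definition right_almost_perfect (R : nzRingType) : Prop :=
  forall I : R -> Prop, two_sided_ideal I ->
    (exists x, I x /\ x <> 0) -> (exists x, ~ I x) ->
    forall (S : nzRingType) (f : {rmorphism R -> S}),
      is_quotient_ring f I -> right_perfect S.

Definition submodule (R : nzRingType) (M : lmodType R) (P : M -> Prop) : Prop :=
  [/\ P 0, (forall x y, P x -> P y -> P (x + y)) & (forall (r : R) x, P x -> P (r *: x))].

Definition simple_submodule (R : nzRingType) (M : lmodType R) (P : M -> Prop) : Prop :=
  [/\ submodule P, (exists x, P x /\ x <> 0) &
      forall Q : M -> Prop, submodule Q -> (forall x, Q x -> P x) ->
        (forall x, Q x -> x = 0) \/ (forall x, P x -> Q x)].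

Definition non_faithful (R : nzRingType) (M : lmodType R) : Prop :=
  exists r : R, r <> 0 /\ forall m : M, r *: m = 0.

Definition semiartinian (R : nzRingType) (M : lmodType R) : Prop :=
  forall (N : lmodType R) (f : {linear M -> N}),
    (forall y, exists x, f x = y) -> (exists y : N, y <> 0) ->
    exists P : N -> Prop, simple_submodule P.

From HB Require Import structures.
From mathcomp Require Import all_boot all_order all_algebra.
From Stdlib Require Import Classical ClassicalEpsilon FunctionalExtensionality PropExtensionality.
Set Implicit Arguments. Unset Strict Implicit. Unset Printing Implicit Defensive.
Import GRing.Theory.
Local Open Scope ring_scope.

(* Let I = ann M, a nonzero ideal; I <> R since M has a nonzero image.  Then
   R/I is right perfect; let K0 be the kernel of R -> (R/I)/J(R/I).  Modulo K0,
   R is a semisimple left module, and K0 is right T-nilpotent modulo I, which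
   kills every image N of M.  T-nilpotence yields a nonzero y in N with
   K0 y = 0; a maximal left ideal K above ann y then has a complement K' modulo
   K0, and K' y is a simple submodule of N. *)

Section LeftIdeals.
Variable R : nzRingType.
Implicit Types (r s x y : R).

Section Closure.
Variables (L : R -> Prop) (hL : left_ideal L).
Lemma lideal0 : L 0. Proof. by case: hL. Qed.
Lemma lidealD x y : L x -> L y -> L (x + y). Proof. by case: hL => _ h _; apply: h. Qed.
Lemma lidealMl r x : L x -> L (r * x). Proof. by case: hL => _ _ h; apply: h. Qed.
Lemma lidealN x : L x -> L (- x). Proof. by move=> Lx; rewrite -mulN1r; apply: lidealMl. Qed.
Lemma lidealB x y : L x -> L y -> L (x - y).
Proof. by move=> Lx Ly; apply: lidealD => //; apply: lidealN. Qed.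
End Closure.

Lemma lideal_sum (L1 L2 : R -> Prop) : left_ideal L1 -> left_ideal L2 ->
  left_ideal (fun x => exists u v, [/\ L1 u, L2 v & x = u + v]).
Proof.
move=> hL1 hL2; split.
- by exists 0, 0; rewrite addr0; split=> //; apply: lideal0.
- move=> _ _ [u1 [v1 [L1u1 L2v1 ->]]] [u2 [v2 [L1u2 L2v2 ->]]].
  by exists (u1 + u2), (v1 + v2); rewrite addrACA; split=> //; apply: lidealD.
- move=> r _ [u [v [L1u L2v ->]]].
  by exists (r * u), (r * v); rewrite mulrDr; split=> //; apply: lidealMl.
Qed.

Lemma lideal_meet (L1 L2 : R -> Prop) : left_ideal L1 -> left_ideal L2 ->
  left_ideal (fun x => L1 x /\ L2 x).
Proof.
move=> hL1 hL2; split.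
- by split; apply: lideal0.
- by move=> x y [? ?] [? ?]; split; apply: lidealD.
- by move=> r x [? ?]; split; apply: lidealMl.
Qed.

Lemma lideal_mulr_image (L : R -> Prop) s : left_ideal L -> left_ideal (fun u => exists w, L w /\ u = w * s).
Proof.
move=> hL; split.
- by exists 0; rewrite mul0r; split=> //; apply: lideal0.
- by move=> _ _ [w1 [Lw1 ->]] [w2 [Lw2 ->]]; exists (w1 + w2); rewrite mulrDl; split=> //; apply: lidealD.
- by move=> r _ [w [Lw ->]]; exists (r * w); rewrite mulrA; split=> //; apply: lidealMl.
Qed.

Lemma lideal_colon (L : R -> Prop) s : left_ideal L -> left_ideal (fun z => L (z * s)).
Proof.
move=> hL; split.
- by rewrite mul0r; apply: lideal0.
- by move=> x y Lx Ly; rewrite mulrDl; apply: lidealD.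
- by move=> r x Lx; rewrite -mulrA; apply: lidealMl.
Qed.

Lemma two_sided_lideal (I : R -> Prop) : two_sided_ideal I -> left_ideal I.
Proof. by case. Qed.

Lemma idealMr (I : R -> Prop) r x : two_sided_ideal I -> I x -> I (x * r).
Proof. by case=> _ hr; apply: hr. Qed.

Lemma ideal_subD (I : R -> Prop) x x' y y' : left_ideal I ->
  I (x - x') -> I (y - y') -> I (x + y - (x' + y')).
Proof. by move=> hI hx hy; rewrite opprD addrACA; apply: lidealD. Qed.

Lemma ideal_subM (I : R -> Prop) x x' y y' : two_sided_ideal I ->
  I (x - x') -> I (y - y') -> I (x * y - x' * y').
Proof.
move=> hI hx hy; have hIl := two_sided_lideal hI.
have -> : x * y - x' * y' = (x - x') * y + x' * (y - y').
  by rewrite mulrBl mulrBr addrA subrK.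
by apply: lidealD => //; [apply: idealMr | apply: lidealMl].
Qed.

End LeftIdeals.

Section Submodules.
Variables (R : nzRingType) (M : lmodType R).
Implicit Types (P : M -> Prop) (L : R -> Prop).

Section Closure.
Variables (P : M -> Prop) (hP : submodule P).
Lemma submod0 : P 0. Proof. by case: hP. Qed.
Lemma submodD x y : P x -> P y -> P (x + y). Proof. by case: hP => _ h _; apply: h. Qed.
Lemma submodZ (r : R) x : P x -> P (r *: x). Proof. by case: hP => _ _ h; apply: h. Qed.
End Closure.

Lemma submod_zero : submodule (fun m : M => m = 0).
Proof.
split=> // [x y -> ->|r x ->]; first by rewrite addr0.
by rewrite scaler0.
Qed.

Lemma lideal_preim_scale P (y : M) : submodule P -> left_ideal (fun r => P (r *: y)).
Proof.
move=> hP; split.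
- by rewrite scale0r; apply: submod0.
- by move=> a b Pa Pb; rewrite scalerDl; apply: submodD.
- by move=> r a Pa; rewrite -scalerA; apply: submodZ.
Qed.

Lemma submod_lideal_scale L (y : M) : left_ideal L ->
  submodule (fun m => exists a, L a /\ m = a *: y).
Proof.
move=> hL; split.
- by exists 0; rewrite scale0r; split=> //; apply: lideal0.
- by move=> _ _ [a [La ->]] [b [Lb ->]]; exists (a + b); rewrite scalerDl; split=> //; apply: lidealD.
- by move=> r _ [a [La ->]]; exists (r * a); rewrite scalerA; split=> //; apply: lidealMl.
Qed.

Lemma annihilator_ideal : two_sided_ideal (fun r : R => forall m : M, r *: m = 0).
Proof.
split; first split.
- by move=> m; rewrite scale0r.
- by move=> x y hx hy m; rewrite scalerDl hx hy addr0.
- by move=> r x hx m; rewrite -scalerA hx scaler0.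
- by move=> r x hx m; rewrite -scalerA hx.
Qed.

End Submodules.

Section QuotientRing.
Variables (R : nzRingType) (I : R -> Prop).
Hypotheses (hI : two_sided_ideal I) (hI1 : ~ I 1).

Let hIl : left_ideal I := two_sided_lideal hI.

Definition qrepr (x : R) : R := epsilon (inhabits 0) (fun y => I (x - y)).

Lemma qreprP x : I (x - qrepr x).
Proof.
apply: (epsilon_spec (inhabits 0) (fun y => I (x - y))).
by exists x; rewrite subrr; apply: lideal0.
Qed.

Lemma qreprPr x : I (qrepr x - x).
Proof. by rewrite -opprB; apply: lidealN => //; apply: qreprP. Qed.

Lemma qrepr_eq x y : I (x - y) -> qrepr x = qrepr y.
Proof.
move=> Ixy; rewrite /qrepr; congr epsilon; apply: functional_extensionality => z.
apply: propositional_extensionality; split=> Iz.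
  have -> : y - z = (x - z) - (x - y) by rewrite opprB [RHS]addrC addrA subrK.
  exact: lidealB.
have -> : x - z = (x - y) + (y - z) by rewrite addrA subrK.
exact: lidealD.
Qed.

Lemma qreprK x : qrepr (qrepr x) = qrepr x.
Proof. by apply: qrepr_eq; apply: qreprPr. Qed.

(* The hypotheses are parameters of the carrier so that the ring instance
   below, which needs them, is found by unification on the type alone. *)
Definition quot_ring (_ : two_sided_ideal I) (_ : ~ I 1) : Type :=
  {x : R | qrepr x == x}.
Local Notation Q := (quot_ring hI hI1).
HB.instance Definition _ := Choice.on Q.

Definition qpi (x : R) : Q := exist _ (qrepr x) (introT eqP (qreprK x)).

Lemma qpi_val (a : Q) : qpi (val a) = a.
Proof. by apply: val_inj => /=; apply/eqP; case: a. Qed.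

Lemma qpi_eq x y : I (x - y) -> qpi x = qpi y.
Proof. by move=> Ixy; apply: val_inj; apply: qrepr_eq. Qed.

Lemma qpi_eqP x y : qpi x = qpi y -> I (x - y).
Proof.
move=> /(congr1 val) /= e.
have -> : x - y = (x - qrepr x) - (y - qrepr y) by rewrite e opprB addrA subrK.
by apply: lidealB => //; apply: qreprP.
Qed.

Definition qadd (a b : Q) := qpi (val a + val b).
Definition qopp (a : Q) := qpi (- val a).
Definition qmul (a b : Q) := qpi (val a * val b).

Lemma qaddE x y : qadd (qpi x) (qpi y) = qpi (x + y).
Proof. by apply: qpi_eq; apply: ideal_subD => //; apply: qreprPr. Qed.

Lemma qoppE x : qopp (qpi x) = qpi (- x).
Proof. by apply: qpi_eq; rewrite -opprD; apply: lidealN => //; apply: qreprPr. Qed.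

Lemma qmulE x y : qmul (qpi x) (qpi y) = qpi (x * y).
Proof. by apply: qpi_eq; apply: ideal_subM => //; apply: qreprPr. Qed.

Lemma qaddA : associative qadd.
Proof. by move=> a b c; rewrite -[a]qpi_val -[b]qpi_val -[c]qpi_val !qaddE addrA. Qed.
Lemma qaddC : commutative qadd.
Proof. by move=> a b; rewrite -[a]qpi_val -[b]qpi_val !qaddE addrC. Qed.
Lemma qadd0 : left_id (qpi 0) qadd.
Proof. by move=> a; rewrite -[a]qpi_val qaddE add0r. Qed.
Lemma qaddN : left_inverse (qpi 0) qopp qadd.
Proof. by move=> a; rewrite -[a]qpi_val qoppE qaddE addNr. Qed.
Lemma qmulA : associative qmul.
Proof. by move=> a b c; rewrite -[a]qpi_val -[b]qpi_val -[c]qpi_val !qmulE mulrA. Qed.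
Lemma qmul1 : left_id (qpi 1) qmul.
Proof. by move=> a; rewrite -[a]qpi_val qmulE mul1r. Qed.
Lemma qmulr1 : right_id (qpi 1) qmul.
Proof. by move=> a; rewrite -[a]qpi_val qmulE mulr1. Qed.
Lemma qmulDl : left_distributive qmul qadd.
Proof.
by move=> a b c; rewrite -[a]qpi_val -[b]qpi_val -[c]qpi_val !(qmulE, qaddE) mulrDl.
Qed.
Lemma qmulDr : right_distributive qmul qadd.
Proof.
by move=> a b c; rewrite -[a]qpi_val -[b]qpi_val -[c]qpi_val !(qmulE, qaddE) mulrDr.
Qed.
Lemma qone_neq0 : qpi 1 != qpi 0.
Proof. by apply/eqP => /qpi_eqP; rewrite subr0. Qed.

HB.instance Definition _ := GRing.isNzRing.Build Q qaddA qaddC qadd0 qaddN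
  qmulA qmul1 qmulr1 qmulDl qmulDr qone_neq0.

Lemma qpi_is_zmod_morphism : zmod_morphism qpi.
Proof. by move=> x y; rewrite -qaddE -qoppE. Qed.
HB.instance Definition _ := GRing.isZmodMorphism.Build R Q qpi qpi_is_zmod_morphism.

Lemma qpi_is_monoid_morphism : monoid_morphism qpi.
Proof. by split=> // x y; rewrite -qmulE. Qed.
HB.instance Definition _ := GRing.isMonoidMorphism.Build R Q qpi qpi_is_monoid_morphism.

Lemma qpi_quotient : is_quotient_ring (qpi : {rmorphism R -> Q}) I.
Proof.
split=> [a|x]; first by exists (val a); apply: qpi_val.
split=> [/qpi_eqP|Ix]; first by rewrite subr0.
by apply: qpi_eq; rewrite subr0.
Qed.

End QuotientRing.

Lemma quotient_ring_exists (R : nzRingType) (I : R -> Prop) : two_sided_ideal I -> ~ I 1 ->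
  exists (S : nzRingType) (f : {rmorphism R -> S}), is_quotient_ring f I.
Proof. by move=> hI hI1; exists (quot_ring hI hI1), (qpi hI hI1); apply: qpi_quotient. Qed.

Lemma rmorph_rev_prod (R S : nzRingType) (f : {rmorphism R -> S}) (a : nat -> R) n :
  f (rev_prod a n) = rev_prod (fun k => f (a k)) n.
Proof. by elim: n => //= n <-; rewrite rmorphM. Qed.

Section Jacobson.
Variable S : nzRingType.

Lemma jacobson_lideal : left_ideal (@jacobson S).
Proof.
split.
- by move=> L [hL _ _]; apply: lideal0.
- by move=> x y Jx Jy L mL; case: (mL) => hL _ _; apply: lidealD => //; [apply: Jx | apply: Jy].
- by move=> r x Jx L mL; case: (mL) => hL _ _; apply: lidealMl => //; apply: Jx.
Qed.

Lemma maximal_lideal_colon (L : S -> Prop) (s : S) : maximal_left_ideal L -> ~ L s ->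
  maximal_left_ideal (fun z => L (z * s)).
Proof.
move=> [hL nL1 maxL] nLs; split=> [||L' hL' sub]; [exact: lideal_colon | by rewrite mul1r |].
case: (classic (exists2 z, L' z & ~ L (z * s))) => [[z L'z nLzs]|]; last first.
  by move=> nex; right=> x L'x; apply: NNPP => nLxs; apply: nex; exists x.
left.
pose D x := exists u v, [/\ exists w, L' w /\ u = w * s, L v & x = u + v].
have LD x : L x -> D x.
  move=> Lx; exists 0, x; rewrite add0r; split=> //.
  by exists 0; rewrite mul0r; split=> //; apply: lideal0.
have [[_ [l [[w [L'w ->]] Ll e1]]] | DL] := maxL D (lideal_sum (lideal_mulr_image s hL') hL) LD;
  last by case: nLzs; apply: DL; exists (z * s), 0; rewrite addr0; split=> //; [exists z | apply: lideal0].
(* 1 = w s + l gives (1 - s w) s = s l in L, so 1 - s w lies in the colon ideal. *)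
have L'1sw : L' (1 - s * w).
  apply: sub; have -> : (1 - s * w) * s = s * l.
    by rewrite mulrBl mul1r -mulrA -[w * s](addrK l) -e1 mulrBr mulr1 opprB addrC subrK.
  exact: lidealMl.
by rewrite -(subrK (s * w) 1); apply: lidealD => //; apply: lidealMl.
Qed.

Lemma jacobson_ideal : two_sided_ideal (@jacobson S).
Proof.
split=> [|r x Jx L mL]; first exact: jacobson_lideal.
case: (mL) => hL _ _; case: (classic (L r)) => Lr; first exact: lidealMl.
exact: (Jx _ (maximal_lideal_colon mL Lr)).
Qed.

Lemma T_nilpotent_jacobson_proper : right_T_nilpotent (@jacobson S) -> ~ jacobson (1 : S).
Proof.
move=> hT J1; have [n] := hT (fun _ => 1) (fun _ => J1).
have -> : rev_prod (fun _ => 1 : S) n = 1 by elim: n => //= n ->; rewrite mulr1.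
by apply/eqP; apply: oner_neq0.
Qed.

End Jacobson.

Section SemisimpleModulo.
Variables (R : nzRingType) (K0 : R -> Prop).

(* R/K0 is a semisimple left module: left ideals above K0 split off modulo K0. *)
Definition semisimple_mod : Prop :=
  forall L : R -> Prop, left_ideal L -> (forall x, K0 x -> L x) ->
    exists L' : R -> Prop, [/\ left_ideal L', (forall x, L x -> L' x -> K0 x) &
      (forall x, exists y z, [/\ L y, L' z & x = y + z])].

Hypothesis hK0 : semisimple_mod.

Lemma semisimple_mod_chain (c : nat -> R -> Prop) :
  (forall n, left_ideal (c n)) -> (forall n x, c n x -> c n.+1 x) ->
  (forall x, K0 x -> c 0%N x) -> exists n, forall m x, c m x -> c n x.
Proof.
move=> hc cS K0c.
have cmono m n x : (m <= n)%N -> c m x -> c n x.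
  by move=> /subnK <-; elim: (n - m)%N => // k IH cmx; rewrite addSn; apply/cS/IH.
pose U x := exists n, c n x.
have hU : left_ideal U.
  split; first by exists 0%N; apply: lideal0.
    move=> x y [m cmx] [n cny]; exists (maxn m n).
    by apply: lidealD => //; [apply: (cmono m) _ (leq_maxl m n) _ | apply: (cmono n) _ (leq_maxr m n) _].
  by move=> r x [n cnx]; exists n; apply: lidealMl.
have [U' [hU' UU'K0 sumUU']] := hK0 hU (fun x K0x => ex_intro _ 0%N (K0c x K0x)).
(* 1 = e + e' with e in some c n: then every x in U is x e + x e' with x e' in K0. *)
have [e [e' [[n cne] U'e' e1]]] := sumUU' 1.
exists n => m x cmx; have Ux : U x by exists m.
have -> : x = x * e + x * e' by rewrite -mulrDr -e1 mulr1.
apply: lidealD => //; first exact: lidealMl.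
apply: (cmono 0%N) => //; apply: K0c; apply: UU'K0; last exact: lidealMl.
have -> : x * e' = x - x * e by rewrite -[x in x - _](mulr1 x) e1 mulrDr addrC addKr.
by apply: lidealB => //; apply: (lidealMl hU); exists n.
Qed.

Lemma semisimple_mod_maximal (A : R -> Prop) : left_ideal A -> (forall x, K0 x -> A x) -> ~ A 1 ->
  exists K, maximal_left_ideal K /\ (forall x, A x -> K x).
Proof.
move=> hA K0A nA1; apply: NNPP => nomax.
pose proper_above K := [/\ left_ideal K, (forall x, A x -> K x) & ~ K 1].
have grow K : exists K', proper_above K ->
    [/\ proper_above K', (forall x, K x -> K' x) & exists2 x, K' x & ~ K x].
  case: (classic (proper_above K)) => [[hK AK nK1]|]; last by exists K.
  apply: NNPP => nobigger; apply: nomax; exists K; split=> //; split=> // K' hK' KK'.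
  case: (classic (K' 1)) => [|nK'1]; [by left | right=> x K'x].
  apply: NNPP => nKx; apply: nobigger; exists K' => _.
  by split=> //; [split=> // y Ay; apply/KK'/AK | exists x].
pose next K := proj1_sig (constructive_indefinite_description _ (grow K)).
have nextP K : proper_above K ->
    [/\ proper_above (next K), (forall x, K x -> next K x) & exists2 x, next K x & ~ K x].
  exact: (proj2_sig (constructive_indefinite_description _ (grow K))).
pose c n := iter n next A.
have cP n : proper_above (c n) by elim: n => [|n IH]; [split | case: (nextP _ IH)].
have [n cn] : exists n, forall m x, c m x -> c n x.
  apply: semisimple_mod_chain => [k|k|//].
    by case: (cP k).
  by case: (nextP _ (cP k)).
by case: (nextP _ (cP n)) => _ _ [x /(cn n.+1)].
Qed.

End SemisimpleModulo.

Lemma semisimple_mod_kernel (R T : nzRingType) (h : {rmorphism R -> T}) :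
  (forall t, exists x, h x = t) -> semisimple_ring T -> semisimple_mod (fun x => h x = 0).
Proof.
move=> hsurj hT L hL kerL.
pose hL_img t := exists x, L x /\ h x = t.
have hLi : left_ideal hL_img.
  split; first by exists 0; rewrite rmorph0; split=> //; apply: lideal0.
    by move=> _ _ [x [Lx <-]] [y [Ly <-]]; exists (x + y); rewrite rmorphD; split=> //; apply: lidealD.
  move=> t _ [x [Lx <-]]; have [r <-] := hsurj t.
  by exists (r * x); rewrite rmorphM; split=> //; apply: lidealMl.
have [L'' [hL'' disj sum]] := hT _ hLi.
exists (fun x => L'' (h x)); split.
- split; first by rewrite rmorph0; apply: lideal0.
    by move=> x y ? ?; rewrite rmorphD; apply: lidealD.
  by move=> r x ?; rewrite rmorphM; apply: lidealMl.
- by move=> x Lx L''hx; apply: disj => //; exists x.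
move=> x; have [_ [z'' [[y [Ly <-]] L''z'' e]]] := sum (h x).
have [z ez] := hsurj z''.
exists (x - z), z; split; [|by rewrite ez | by rewrite subrK].
have -> : x - z = (x - z - y) + y by rewrite subrK.
by apply: lidealD => //; apply: kerL; rewrite !rmorphB ez e addrK subrr.
Qed.

Section SimpleSubmodules.
Variables (R : nzRingType) (M : lmodType R) (K0 : R -> Prop).
Hypothesis hK0 : semisimple_mod K0.

Lemma exists_annihilated (y0 : M) : y0 <> 0 ->
  (forall a : nat -> R, (forall n, K0 (a n)) -> exists n, forall m : M, rev_prod a n *: m = 0) ->
  exists2 y : M, y <> 0 & forall r, K0 r -> r *: y = 0.
Proof.
(* Otherwise keep multiplying y0 by elements of K0 that do not kill it. *)
move=> y0_neq0 nilK0; apply: NNPP => noann.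
have pick (y : M) : exists r : R, y <> 0 -> K0 r /\ r *: y <> 0.
  case: (classic (y = 0)) => [->|y_neq0]; first by exists 0.
  apply: NNPP => nor; apply: noann; exists y => // r K0r.
  by apply: NNPP => ry_neq0; apply: nor; exists r.
pose c (y : M) := proj1_sig (constructive_indefinite_description _ (pick y)).
have cP (y : M) : y <> 0 -> K0 (c y) /\ c y *: y <> 0.
  exact: (proj2_sig (constructive_indefinite_description _ (pick y))).
pose ys n := iter n (fun y => c y *: y) y0.
have ys_neq0 n : ys n <> 0 by elim: n => [|n IH] //=; apply: (cP _ IH).2.
pose a n := c (ys n).
have [n an0] := nilK0 a (fun n => (cP _ (ys_neq0 n)).1).
have rev_prod_ys k : rev_prod a k *: y0 = ys k.+1 by elim: k => //= k IH; rewrite -scalerA IH.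
by apply: (ys_neq0 n.+1); rewrite -rev_prod_ys an0.
Qed.

Lemma maximal_above_annihilator_simple (y : M) (K : R -> Prop) :
  (forall r, K0 r -> r *: y = 0) -> maximal_left_ideal K -> (forall x, x *: y = 0 -> K x) ->
  exists P : M -> Prop, simple_submodule P.
Proof.
move=> K0y [hK nK1 maxK] annK.
have K0K x : K0 x -> K x by move=> K0x; apply/annK/K0y.
have [K' [hK' KK'0 sumKK']] := hK0 hK K0K.
have [k [k' [Kk K'k' e1]]] := sumKK' 1.
exists (fun m => exists a, K' a /\ m = a *: y).
split; [exact: submod_lideal_scale | | move=> Q hQ QP].
  exists (k' *: y); split; first by exists k'.
  by move=> k'y0; apply: nK1; rewrite e1; apply: lidealD => //; apply: annK.
pose B v := K' v /\ Q (v *: y).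
have hB : left_ideal B := lideal_meet hK' (lideal_preim_scale y hQ).
pose L x := exists u v, [/\ K u, B v & x = u + v].
have KL x : K x -> L x.
  by move=> Kx; exists x, 0; rewrite addr0; split=> //; apply: lideal0.
case: (maxK L (lideal_sum hK hB) KL) => [[u [v [Ku [K'v Qvy] e1']]] | LK].
(* Here 1 = u + v, so for a in K' the element a u = a - a v lies in K and in K', hence in K0. *)
  right=> _ [a [K'a ->]].
  have ea : a = a * u + a * v by rewrite -mulrDr -e1' mulr1.
  have K0au : K0 (a * u).
    apply: KK'0; first exact: lidealMl.
    have -> : a * u = a - a * v by rewrite {2}ea addrK.
    by apply: lidealB => //; apply: lidealMl.
  by rewrite ea scalerDl K0y // add0r -scalerA; apply: submodZ.
left=> m Qm; have [a [K'a em]] := QP m Qm; rewrite em in Qm *.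
apply/K0y/KK'0 => //; apply: LK; exists 0, a; rewrite add0r.
by split=> //; apply: lideal0.
Qed.

Lemma semisimple_mod_simple_submodule :
  (forall a : nat -> R, (forall n, K0 (a n)) -> exists n, forall m : M, rev_prod a n *: m = 0) ->
  (exists y : M, y <> 0) -> exists P : M -> Prop, simple_submodule P.
Proof.
move=> nilK0 [y0 y0_neq0]; have [y y_neq0 K0y] := exists_annihilated y0_neq0 nilK0.
have hA : left_ideal (fun r => r *: y = 0) := lideal_preim_scale y (submod_zero M).
have nA1 : ~ (1 *: y = 0) by rewrite scale1r.
have [K [maxK annK]] := semisimple_mod_maximal hK0 hA K0y nA1.
exact: maximal_above_annihilator_simple K0y maxK annK.
Qed.

End SimpleSubmodules.

Theorem lemma3p5 (R : nzRingType) (hR : right_almost_perfect R)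
  (M : lmodType R) : non_faithful M -> semiartinian M.
Proof.
move=> [r0 [r0_neq0 r0M]] N f f_surj N_neq0.
pose I (r : R) := forall m : M, r *: m = 0.
have IN r : I r -> forall n : N, r *: n = 0.
  by move=> Ir n; have [m <-] := f_surj n; rewrite -linearZ /= Ir linear0.
have nI1 : ~ I 1 by case: N_neq0 => y y_neq0 I1; apply: y_neq0; rewrite -[y]scale1r IN.
have [S [f1 qf1]] := quotient_ring_exists (annihilator_ideal M) nI1.
have [Jnil Jss] := hR I (annihilator_ideal M) (ex_intro _ r0 (conj r0M r0_neq0))
  (ex_intro _ 1 nI1) S f1 qf1.
have [T [g qg]] := quotient_ring_exists (jacobson_ideal S) (T_nilpotent_jacobson_proper Jnil).
have gf1_surj t : exists x, (g \o f1) x = t.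
  by have [s <-] := qg.1 t; have [x <-] := qf1.1 s; exists x.
apply: (semisimple_mod_simple_submodule (semisimple_mod_kernel gf1_surj (Jss T g qg))) N_neq0.
move=> a K0a; have [n an0] := Jnil _ (fun k => (qg.2 (f1 (a k))).1 (K0a k)).
by exists n; apply: IN; apply/(qf1.2 _); rewrite rmorph_rev_prod.
Qed.
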